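(* Assume $\alpha=2$, the far-destination approximation (every relay–destination distance equals $d$), and condition on $N\ge1$. Let $i^*$ be the relay closest to the source; conditioned on $N\ge1$, its distance $d_{i^*}$ has density $f(r)=2\zeta\pi\lambda r e^{-\pi\lambda r^2}$ on $[0,R_{\mathcal D}]$ with $\zeta=1/(1-e^{-\pi\lambda R_{\mathcal D}^2})$. Define $$\mathcal{P}_2(P)=\mathcal{P}\big(x_0+\eta y_{i^*}(x_{i^*}-\epsilon)<\epsilon,\ x_{i^*}>\epsilon\big)+\mathcal{P}\big(x_0<\epsilon,\ x_{i^*}<\epsilon\big),$$ with $x_{i^*}=|h_{i^*}|^2/(1+d_{i^*}^2)$, $y_{i^*}=|g_{i^*}|^2/(1+d^2)$. Then the diversity gain of this selection scheme is $2$: $-\lim_{P\to\infty}\frac{\log\mathcal{P}_2(P)}{\log P}=2$.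
   Context: Source at origin, destination at distance $d>0$; relays form a homogeneous Poisson point process of intensity $\lambda>0$ in the disc of radius $R_{\mathcal D}$ centred at the source. Fading $h_d,h_{i^*},g_{i^*}$ independent $\mathcal{CN}(0,1)$, independent of locations; $x_0=|h_d|^2/(1+d^2)$. $\tau=2^{2R}-1$ for target rate $R>0$, $\epsilon=\tau/P$ with transmit power $P$, $\eta\in(0,1]$ energy harvesting efficiency. Relay decodes iff $x_{i^*}>\epsilon$ and forwards with harvested power $\eta(Px_{i^*}-\tau)$; outage when combined SNR $P(x_0+\eta y_{i^*}(x_{i^*}-\epsilon))<\tau$. *)

From Stdlib Require Import Reals.
Open Scope R_scope.

Definition is_RInt (f : R -> R) (a b v : R) : Prop :=
  exists pr : Riemann_integrable f a b, RiemannInt pr = v.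

Definition is_RInt_infty (f : R -> R) (a v : R) : Prop :=
  (forall b, a <= b -> inhabited (Riemann_integrable f a b)) /\
  (forall e, 0 < e -> exists M, forall b (pr : Riemann_integrable f a b),
      M <= b -> Rabs (RiemannInt pr - v) < e).

Definition zeta (lam RD : R) : R := / (1 - exp (- (PI * lam * RD ^ 2))).
Definition dens_closest (lam RD r : R) : R :=
  2 * zeta lam RD * PI * lam * r * exp (- (PI * lam * r ^ 2)).

Definition tau (Rt : R) : R := Rpower 2 (2 * Rt) - 1.
Definition epsP (Rt P : R) : R := tau Rt / P.

(* Since |h|^2 ~ Exp(1), x = |h|^2/(1+s^2) is exponential with rate 1+s^2:
   CDF  1 - exp(-(1+s^2) t)  and density (1+s^2) exp(-(1+s^2) t) on t >= 0. *)
Definition exp_cdf (rate t : R) : R := 1 - exp (- (rate * t)).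
Definition exp_pdf (rate t : R) : R := rate * exp (- (rate * t)).

(* is_P2 d lam RD eta Rt P v  :  v = P2(P) where
   P2(P) = Pr(x0 + eta*y*(x-eps) < eps, x > eps) + Pr(x0 < eps, x < eps),
   x0 ~ Exp(1+d^2), y ~ Exp(1+d^2), x | r ~ Exp(1+r^2), r ~ dens_closest,
   all independent (given r).  The first probability is written as
     int_0^RD f(r) int_eps^oo p_x(x|r) int_0^{eps/(eta (x-eps))} p_y(y)
        F_{x0}(eps - eta y (x-eps)) dy dx dr
   (the constraint x0 + eta y (x-eps) < eps with x0 >= 0 forces
    y < eps / (eta (x - eps))). *)
Definition is_P2 (d lam RD eta Rt P v : R) : Prop :=
  let e := epsP Rt P in
  let b := 1 + d ^ 2 in
  exists (H : R -> R) (G : R -> R) (T1 T2 : R),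
    (forall x, e < x ->
       is_RInt (fun y => exp_pdf b y * exp_cdf b (e - eta * y * (x - e)))
               0 (e / (eta * (x - e))) (H x)) /\
    (forall r, 0 <= r <= RD ->
       is_RInt_infty (fun x => exp_pdf (1 + r ^ 2) x * H x) e (G r)) /\
    is_RInt (fun r => dens_closest lam RD r * G r) 0 RD T1 /\
    is_RInt (fun r => dens_closest lam RD r * exp_cdf (1 + r ^ 2) e) 0 RD T2 /\
    v = T1 + exp_cdf b e * T2.

(* For small [eps = tau / P] both outage events have probability of order [eps^2]:
   the second is the intersection of two independent events of probability about
   [eps], and in the first, with [b = 1 + d^2], the inner probability given [x] is at most
   [min (b eps, b^2 eps^2 / (eta (x - eps)))], whose integral over [x > eps] is
   [O (eps^2 |ln eps|)].  Hence [b eps^2 / 4 <= P2(P) <= eps^2 (C1 + C2 |ln eps|)],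
   and taking logarithms gives [- ln P2(P) / ln P -> 2].
   That [P2(P)] exists at all takes some care: the inner integral has a closed form
   that is continuous in [x], and the improper [x]-integral is Lipschitz in the
   rate [1 + r^2], hence continuous in [r]. *)

From Pilot Require Import Defs.
From Stdlib Require Import Reals Lra.
From Stdlib Require Import IndefiniteDescription Classical_Pred_Type.
From Coquelicot Require Import Coquelicot.
Open Scope R_scope.

(** * Riemann integrals *)

Lemma Defs_is_RInt_of_is_RInt (f : R -> R) a b v :
  is_RInt f a b v -> Defs.is_RInt f a b v.
Proof.
  intros H. exists (ex_RInt_Reals_0 f a b (ex_intro _ v H)).
  rewrite <- RInt_Reals. exact (is_RInt_unique f a b v H).
Qed.

Lemma RInt_of_Defs_is_RInt (f : R -> R) a b v :
  Defs.is_RInt f a b v -> ex_RInt f a b /\ RInt f a b = v.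
Proof.
  intros [pr <-]. split; [exact (ex_RInt_Reals_1 f a b pr) | apply RInt_Reals].
Qed.

Lemma continuity_pt_of_ex_derive (f : R -> R) x : ex_derive f x -> continuity_pt f x.
Proof. intros H. apply continuity_pt_filterlim, (ex_derive_continuous f x H). Qed.

Lemma ex_RInt_of_continuity (f : R -> R) a b :
  (forall x, continuity_pt f x) -> ex_RInt f a b.
Proof.
  intros H. apply (@ex_RInt_continuous R_CompleteNormedModule).
  intros z _. apply continuity_pt_filterlim, H.
Qed.

Lemma is_RInt_antiderivative (F f : R -> R) a b :
  (forall x, is_derive F x (f x)) -> (forall x, continuity_pt f x) ->
  is_RInt f a b (F b - F a).
Proof.
  intros HF Hf. apply (is_RInt_derive F f a b); intros x _; [apply HF|].
  apply continuity_pt_filterlim, Hf.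
Qed.

Lemma is_RInt_const_R c a b : is_RInt (fun _ => c) a b ((b - a) * c).
Proof. exact (@is_RInt_const R_NormedModule a b c). Qed.

Lemma continuity_pt_of_local_lipschitz (f : R -> R) x0 K :
  (forall x, Rabs (x - x0) < 1 -> Rabs (f x - f x0) <= K * Rabs (x - x0)) ->
  continuity_pt f x0.
Proof.
  intros Hf eps Heps. set (K' := Rabs K + 1).
  exists (Rmin 1 (eps / K')). split.
  { apply Rmin_pos; [lra | apply Rdiv_lt_0_compat; unfold K'; pose proof (Rabs_pos K); lra]. }
  intros x [_ Hx]. simpl in *. unfold Rdist in *.
  pose proof (Rmin_l 1 (eps / K')). pose proof (Rmin_r 1 (eps / K')).
  pose proof (Hf x ltac:(lra)). pose proof (Rle_abs K). pose proof (Rabs_pos (x - x0)).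
  assert (HK' : 0 < K') by (unfold K'; pose proof (Rabs_pos K); lra).
  assert (K' * Rabs (x - x0) < eps).
  { replace eps with (K' * (eps / K')) by (field; lra). apply Rmult_lt_compat_l; lra. }
  unfold K' in *. nra.
Qed.

Lemma is_RInt_infty_near f a L : is_RInt_infty f a L ->
  forall eps, 0 < eps -> exists M, forall B, a <= B -> M <= B ->
    ex_RInt f a B /\ Rabs (RInt f a B - L) < eps.
Proof.
  intros [Hint Hlim] eps Heps. destruct (Hlim eps Heps) as [M HM].
  exists M. intros B HaB HMB. destruct (Hint B HaB) as [pr].
  split; [exact (ex_RInt_Reals_1 f a B pr)|]. rewrite (RInt_Reals f a B pr). exact (HM B pr HMB).
Qed.

Lemma is_RInt_infty_le f g a L L' K :
  is_RInt_infty f a L -> is_RInt_infty g a L' ->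
  (forall B, a <= B -> RInt f a B <= RInt g a B + K) -> L <= L' + K.
Proof.
  intros Hf Hg Hfg. apply Rle_plus_epsilon. intros eps Heps.
  destruct (is_RInt_infty_near f a L Hf (eps / 2)) as [M HM]; [lra|].
  destruct (is_RInt_infty_near g a L' Hg (eps / 2)) as [M' HM']; [lra|].
  set (B := Rmax a (Rmax M M')).
  assert (HaB : a <= B) by apply Rmax_l.
  assert (HMB : M <= B) by (eapply Rle_trans; [apply Rmax_l | apply Rmax_r]).
  assert (HM'B : M' <= B) by (eapply Rle_trans; [apply Rmax_r | apply Rmax_r]).
  destruct (HM B HaB HMB) as [_ H1]. destruct (HM' B HaB HM'B) as [_ H2].
  apply Rabs_def2 in H1. apply Rabs_def2 in H2. specialize (Hfg B HaB). lra.
Qed.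

Lemma is_RInt_infty_le_const f a L C M :
  is_RInt_infty f a L -> (forall B, M <= B -> RInt f a B <= C) -> L <= C.
Proof.
  intros Hf HC. apply Rle_plus_epsilon. intros eps Heps.
  destruct (is_RInt_infty_near f a L Hf eps Heps) as [M' HM'].
  set (B := Rmax a (Rmax M M')).
  destruct (HM' B (Rmax_l _ _) (Rle_trans _ _ _ (Rmax_r M M') (Rmax_r _ _))) as [_ H].
  apply Rabs_def2 in H. specialize (HC B (Rle_trans _ _ _ (Rmax_l M M') (Rmax_r _ _))). lra.
Qed.

Lemma is_RInt_infty_ge_const f a L C :
  is_RInt_infty f a L -> (forall B, a <= B -> C <= RInt f a B) -> C <= L.
Proof.
  intros Hf HC. apply Rle_plus_epsilon. intros eps Heps.
  destruct (is_RInt_infty_near f a L Hf eps Heps) as [M HM].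
  destruct (HM (Rmax a M) (Rmax_l a M) (Rmax_r a M)) as [_ H].
  apply Rabs_def2 in H. specialize (HC (Rmax a M) (Rmax_l a M)). lra.
Qed.

(* The limit is the supremum of the increasing partial integrals. *)
Lemma is_RInt_infty_of_bounded q a C :
  (forall x, continuity_pt q x) -> (forall x, a <= x -> 0 <= q x) ->
  (forall B, a <= B -> RInt q a B <= C) -> exists L, is_RInt_infty q a L.
Proof.
  intros Hq Hpos HC.
  set (E := fun v => exists B, a <= B /\ v = RInt q a B).
  assert (HE : bound E) by (exists C; intros v [B [HB ->]]; exact (HC B HB)).
  destruct (completeness E HE) as [L [Hub Hlub]];
    [exists (RInt q a a), a; split; [lra | reflexivity]|].
  exists L. split.
  - intros B _. constructor. apply ex_RInt_Reals_0, ex_RInt_of_continuity, Hq.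
  - intros eps Heps.
    assert (HB0 : exists B0, a <= B0 /\ L - eps < RInt q a B0).
    { apply not_all_not_ex. intros Hn.
      assert (L <= L - eps); [|lra]. apply Hlub. intros v [B [HB ->]].
      apply Rnot_lt_le. intros Hlt. exact (Hn B (conj HB Hlt)). }
    destruct HB0 as [B0 [HB0 HLB0]].
    exists B0. intros B pr HB. rewrite <- RInt_Reals.
    assert (HI : RInt q a B0 <= RInt q a B).
    { rewrite <- (RInt_Chasles q a B0 B) by apply ex_RInt_of_continuity, Hq.
      assert (0 <= RInt q B0 B); [|simpl; unfold plus; simpl; lra].
      apply RInt_ge_0; [lra | apply ex_RInt_of_continuity, Hq |].
      intros x Hx. apply Hpos. lra. }
    assert (RInt q a B <= L) by (apply Hub; exists B; split; [lra | reflexivity]).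
    apply Rabs_def1; lra.
Qed.

(** * Exponential laws *)

Lemma exp_le_mono x y : x <= y -> exp x <= exp y.
Proof. intros [H| ->]; [apply Rlt_le, exp_increasing, H | apply Rle_refl]. Qed.

Lemma exp_neg_le_1 x : 0 <= x -> exp (- x) <= 1.
Proof. intros H. rewrite <- exp_0. apply exp_le_mono. lra. Qed.

Lemma Rabs_exp_neg_sub_le u v m : m <= u -> m <= v ->
  Rabs (exp (- u) - exp (- v)) <= Rabs (u - v) * exp (- m).
Proof.
  assert (key : forall u v, m <= v -> v <= u -> 0 <= exp (- v) - exp (- u) <= (u - v) * exp (- m)).
  { intros u0 v0 Hv Hvu.
    replace (exp (- u0)) with (exp (- v0) * exp (- (u0 - v0)))
      by (rewrite <- exp_plus; f_equal; ring).
    pose proof (exp_ineq1_le (- (u0 - v0))). pose proof (exp_neg_le_1 (u0 - v0) ltac:(lra)).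
    pose proof (exp_le_mono (- v0) (- m) ltac:(lra)). pose proof (exp_pos (- v0)). nra. }
  intros Hu Hv. destruct (Rle_or_lt v u) as [Hvu|Huv].
  - destruct (key u v Hv Hvu). rewrite Rabs_minus_sym, Rabs_right, (Rabs_right (u - v)); lra.
  - destruct (key v u Hu (Rlt_le _ _ Huv)). rewrite Rabs_right, Rabs_minus_sym, Rabs_right; lra.
Qed.

Lemma continuity_exp_pdf a x : continuity_pt (exp_pdf a) x.
Proof. apply continuity_pt_of_ex_derive. unfold exp_pdf. auto_derive. exact I. Qed.

Lemma exp_pdf_bounds a x : 0 <= a -> 0 <= x -> 0 <= exp_pdf a x <= a.
Proof.
  intros Ha Hx. unfold exp_pdf. pose proof (exp_pos (- (a * x))).
  pose proof (exp_neg_le_1 (a * x) (Rmult_le_pos _ _ Ha Hx)). nra.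
Qed.

Lemma is_RInt_exp_pdf a u v :
  is_RInt (exp_pdf a) u v (exp (- (a * u)) - exp (- (a * v))).
Proof.
  replace (exp (- (a * u)) - exp (- (a * v)))
    with ((- exp (- (a * v))) - (- exp (- (a * u)))) by ring.
  apply (is_RInt_antiderivative (fun x => - exp (- (a * x)))); [|apply continuity_exp_pdf].
  intros x. auto_derive; [exact I|]. unfold exp_pdf. ring.
Qed.

Lemma Rabs_exp_pdf_sub_le a a' A x : 1 <= a <= A -> 1 <= a' <= A -> 0 <= x ->
  Rabs (exp_pdf a x - exp_pdf a' x) <= Rabs (a - a') * (exp (- x) * (1 + A * x)).
Proof.
  intros Ha Ha' Hx. unfold exp_pdf.
  replace (a * exp (- (a * x)) - a' * exp (- (a' * x)))
    with ((a - a') * exp (- (a * x)) + a' * (exp (- (a * x)) - exp (- (a' * x)))) by ring.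
  eapply Rle_trans; [apply Rabs_triang|]. rewrite !Rabs_mult, (Rabs_right a') by lra.
  rewrite (Rabs_right (exp _)) by apply Rle_ge, Rlt_le, exp_pos.
  pose proof (exp_le_mono (- (a * x)) (- x) ltac:(nra)).
  pose proof (Rabs_exp_neg_sub_le (a * x) (a' * x) x ltac:(nra) ltac:(nra)) as Hd.
  replace (a * x - a' * x) with ((a - a') * x) in Hd by ring.
  rewrite Rabs_mult, (Rabs_right x) in Hd by lra.
  pose proof (Rabs_pos (a - a')). pose proof (exp_pos (- x)).
  assert (a' * Rabs (exp (- (a * x)) - exp (- (a' * x))) <= A * (Rabs (a - a') * x * exp (- x))).
  { apply Rmult_le_compat; try lra. apply Rabs_pos. }
  assert (Rabs (a - a') * exp (- (a * x)) <= Rabs (a - a') * exp (- x))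
    by (apply Rmult_le_compat_l; lra).
  nra.
Qed.

Lemma RInt_exp_neg_affine_le A e B : 0 <= A -> 0 <= e -> e <= B ->
  RInt (fun x => exp (- x) * (1 + A * x)) e B <= 1 + 2 * A.
Proof.
  intros HA He HB.
  assert (HI : is_RInt (fun x => exp (- x) * (1 + A * x)) e B
    ((- (1 + A + A * B) * exp (- B)) - (- (1 + A + A * e) * exp (- e)))).
  { apply (is_RInt_antiderivative (fun x => - (1 + A + A * x) * exp (- x))).
    - intros x. auto_derive; [exact I | ring].
    - intros x. apply continuity_pt_of_ex_derive. auto_derive. exact I. }
  rewrite (is_RInt_unique _ e B _ HI).
  pose proof (exp_pos (- B)). pose proof (exp_neg_le_1 e He).
  assert (e * exp (- e) <= 1).
  { pose proof (exp_ineq1_le e).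
    assert (exp e * exp (- e) = 1) by (rewrite <- exp_plus, Rplus_opp_r; apply exp_0). nra. }
  assert (0 <= (1 + A + A * B) * exp (- B)) by (apply Rmult_le_pos; nra).
  nra.
Qed.

Lemma exp_cdf_bounds b t : 0 <= b * t -> 0 <= exp_cdf b t <= b * t.
Proof.
  intros H. unfold exp_cdf. pose proof (exp_ineq1_le (- (b * t))).
  pose proof (exp_neg_le_1 _ H). lra.
Qed.

Lemma exp_cdf_ge_half b t : 0 <= b * t <= 1 -> b * t / 2 <= exp_cdf b t.
Proof.
  intros H. unfold exp_cdf. set (u := b * t) in *.
  pose proof (exp_ineq1_le u). pose proof (exp_pos (- u)).
  assert (exp u * exp (- u) = 1) by (rewrite <- exp_plus, Rplus_opp_r; apply exp_0).
  nra.
Qed.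

Lemma exp_cdf_rate_bounds a A t : 1 <= a <= A -> 0 <= t <= 1 -> t / 2 <= exp_cdf a t <= A * t.
Proof.
  intros Ha Ht. pose proof (exp_cdf_ge_half 1 t ltac:(lra)).
  pose proof (exp_cdf_bounds a t ltac:(apply Rmult_le_pos; lra)).
  pose proof (exp_le_mono (- (a * t)) (- (1 * t)) ltac:(nra)).
  unfold exp_cdf in *. split; [lra | nra].
Qed.

(* The mean of [t |-> exp (- t)] over [0, z], extended by continuity at [z = 0]. *)
Definition mean_exp (z : R) : R := if Req_EM_T z 0 then 1 else (1 - exp (- z)) / z.

Lemma mean_exp_mul z : z * mean_exp z = 1 - exp (- z).
Proof.
  unfold mean_exp. destruct (Req_EM_T z 0) as [->|Hz].
  - rewrite Ropp_0, exp_0. ring.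
  - field. exact Hz.
Qed.

Lemma continuity_mean_exp z : continuity_pt mean_exp z.
Proof.
  destruct (Req_EM_T z 0) as [->|Hz].
  - intros eps Heps. destruct (derivable_pt_lim_exp_0 eps Heps) as [del Hdel].
    exists del. split; [apply cond_pos|]. intros y [_ Hy]. simpl in *. unfold Rdist in *.
    unfold mean_exp. destruct (Req_EM_T 0 0) as [_|]; [|congruence].
    destruct (Req_EM_T y 0) as [->|Hy0]; [rewrite Rminus_diag, Rabs_R0; exact Heps|].
    (* [(1 - e^{-y}) / y] is the difference quotient of [exp] at 0 with step [- y] *)
    replace ((1 - exp (- y)) / y - 1) with ((exp (0 + - y) - exp 0) / (- y) - 1)
      by (rewrite exp_0, Rplus_0_l; field; exact Hy0).
    apply Hdel; [lra|]. rewrite Rabs_Ropp. rewrite Rminus_0_r in Hy. exact Hy.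
  - apply (continuity_pt_locally_ext (fun y => (1 - exp (- y)) / y)) with (a := Rabs z).
    + apply Rabs_pos_lt, Hz.
    + intros y Hy. unfold mean_exp. destruct (Req_EM_T y 0) as [->|]; [|reflexivity].
      unfold Rdist in Hy. rewrite Rminus_0_l, Rabs_Ropp in Hy. lra.
    + apply continuity_pt_of_ex_derive. auto_derive. exact Hz.
Qed.

Lemma is_RInt_exp_neg_lin k Y :
  is_RInt (fun y => exp (- (k * y))) 0 Y (Y * mean_exp (k * Y)).
Proof.
  destruct (Req_EM_T k 0) as [->|Hk].
  - rewrite Rmult_0_l. unfold mean_exp. destruct (Req_EM_T 0 0) as [_|]; [|congruence].
    apply (is_RInt_ext (fun _ => 1)).
    + intros y _. rewrite Rmult_0_l, Ropp_0, exp_0. reflexivity.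
    + replace (Y * 1) with ((Y - 0) * 1) by ring. apply is_RInt_const_R.
  - replace (Y * mean_exp (k * Y))
      with ((- exp (- (k * Y)) / k) - (- exp (- (k * 0)) / k)).
    + apply (is_RInt_antiderivative (fun y => - exp (- (k * y)) / k)).
      * intros y. auto_derive; [exact I|]. field. exact Hk.
      * intros y. apply continuity_pt_of_ex_derive. auto_derive. exact I.
    + apply (Rmult_eq_reg_l k); [|exact Hk].
      rewrite <- Rmult_assoc, (Rmult_comm k Y), mean_exp_mul, Rmult_0_r, Ropp_0, exp_0.
      field. exact Hk.
Qed.

(** * The inner integral *)

(* Closed form of the inner integral of [is_P2]; for [x <= e] it takes its limit
   value as [x -> e+], which makes it continuous. *)
Definition cond_outage (b e eta x : R) : R :=
  if Rle_dec x e then exp_cdf b e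
  else let u := b * e / (eta * (x - e)) in
       1 - exp (- u) - u * exp (- (b * e)) * mean_exp (u - b * e).

Lemma is_RInt_cond_outage b e eta x : 0 < eta -> e < x ->
  is_RInt (fun y => exp_pdf b y * exp_cdf b (e - eta * y * (x - e)))
    0 (e / (eta * (x - e))) (cond_outage b e eta x).
Proof.
  intros Heta Hx. unfold cond_outage.
  destruct (Rle_dec x e) as [|_]; [lra|]. cbv zeta.
  set (s := eta * (x - e)). assert (Hs : 0 < s) by (apply Rmult_lt_0_compat; lra).
  set (Y := e / s).
  (* the integrand is [b e^{-b y} - b e^{-b e} e^{-b (1 - s) y}] *)
  pose proof (is_RInt_minus _ _ 0 Y _ _
    (is_RInt_scal _ 0 Y b _ (is_RInt_exp_neg_lin b Y))
    (is_RInt_scal _ 0 Y (b * exp (- (b * e))) _ (is_RInt_exp_neg_lin (b * (1 - s)) Y))) as H.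
  unfold minus, plus, opp, scal in H; simpl in H; unfold mult in H; simpl in H.
  assert (HbY : b * Y = b * e / s) by (unfold Y, Rdiv; ring).
  replace (1 - exp (- (b * e / s)) - b * e / s * exp (- (b * e)) * mean_exp (b * e / s - b * e))
    with (b * (Y * mean_exp (b * Y)) + - (b * exp (- (b * e)) * (Y * mean_exp (b * (1 - s) * Y)))).
  2:{ replace (b * (1 - s) * Y) with (b * e / s - b * e) by (unfold Y; field; lra).
      replace (b * (Y * mean_exp (b * Y))) with (b * Y * mean_exp (b * Y)) by ring.
      rewrite mean_exp_mul, HbY. unfold Y. field. lra. }
  refine (is_RInt_ext _ _ 0 Y _ (fun y _ => _) H).
  change (b * exp (- (b * y)) + - (b * exp (- (b * e)) * exp (- (b * (1 - s) * y)))
          = exp_pdf b y * exp_cdf b (e - eta * y * (x - e))).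
  unfold exp_pdf, exp_cdf.
  replace (- (b * (e - eta * y * (x - e)))) with (- (b * e) + b * s * y) by (unfold s; ring).
  replace (- (b * (1 - s) * y)) with (- (b * y) + b * s * y) by ring.
  rewrite !exp_plus. ring.
Qed.

Lemma inner_integral_bounds b e eta x h : 0 < b -> 0 < e -> 0 < eta -> e < x ->
  is_RInt (fun y => exp_pdf b y * exp_cdf b (e - eta * y * (x - e))) 0 (e / (eta * (x - e))) h ->
  0 <= h /\ h <= 1 /\ h <= b * e /\ h <= b * (b * e) * (e / (eta * (x - e))).
Proof.
  intros Hb He Heta Hx Hh.
  set (s := eta * (x - e)) in *. assert (Hs : 0 < s) by (apply Rmult_lt_0_compat; lra).
  set (Y := e / s) in *. assert (HY : 0 < Y) by (apply Rdiv_lt_0_compat; lra).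
  assert (Hpt : forall y, 0 < y < Y ->
    0 <= exp_pdf b y <= b /\ 0 <= exp_cdf b (e - eta * y * (x - e)) <= b * e).
  { intros y [Hy0 HyY]. split; [apply exp_pdf_bounds; lra|].
    assert (Hsy : s * y < e).
    { apply (Rmult_lt_compat_l s) in HyY; [|exact Hs]. unfold Y in HyY.
      replace (s * (e / s)) with e in HyY by (field; lra). exact HyY. }
    replace (e - eta * y * (x - e)) with (e - s * y) by (unfold s; ring).
    pose proof (exp_cdf_bounds b (e - s * y) ltac:(apply Rmult_le_pos; nra)).
    assert (b * (e - s * y) <= b * e) by (apply Rmult_le_compat_l; nra). lra. }
  pose proof (is_RInt_exp_pdf b 0 Y) as Hpdf.
  pose proof (is_RInt_scal _ 0 Y (b * e) _ Hpdf) as Hpdf'.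
  unfold scal in Hpdf'; simpl in Hpdf'; unfold mult in Hpdf'; simpl in Hpdf'.
  rewrite Rmult_0_r, Ropp_0, exp_0 in Hpdf, Hpdf'.
  pose proof (exp_pos (- (b * Y))).
  repeat split.
  - replace 0 with ((Y - 0) * 0) by ring.
    apply (is_RInt_le _ _ 0 Y _ _ (Rlt_le _ _ HY) (is_RInt_const_R 0 0 Y) Hh).
    intros y Hy. destruct (Hpt y Hy). apply Rmult_le_pos; lra.
  - apply Rle_trans with (1 - exp (- (b * Y))); [|lra].
    apply (is_RInt_le _ _ 0 Y _ _ (Rlt_le _ _ HY) Hh Hpdf).
    intros y Hy. destruct (Hpt y Hy). unfold exp_cdf at 1.
    pose proof (exp_pos (- (b * (e - eta * y * (x - e))))). nra.
  - apply Rle_trans with (b * e * (1 - exp (- (b * Y)))).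
    + apply (is_RInt_le _ _ 0 Y _ _ (Rlt_le _ _ HY) Hh Hpdf').
      intros y Hy. destruct (Hpt y Hy). rewrite Rmult_comm. apply Rmult_le_compat_r; lra.
    + assert (0 < b * e) by (apply Rmult_lt_0_compat; lra). nra.
  - replace (b * (b * e) * Y) with ((Y - 0) * (b * (b * e))) by ring.
    apply (is_RInt_le _ _ 0 Y _ _ (Rlt_le _ _ HY) Hh (is_RInt_const_R _ 0 Y)).
    intros y Hy. destruct (Hpt y Hy). apply Rmult_le_compat; lra.
Qed.

Lemma cond_outage_bounds b e eta x :
  0 < b -> 0 < e -> 0 < eta -> 0 <= cond_outage b e eta x <= 1.
Proof.
  intros Hb He Heta. destruct (Rle_dec x e) as [Hxe|Hxe].
  - unfold cond_outage. destruct (Rle_dec x e); [|contradiction].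
    unfold exp_cdf. pose proof (exp_pos (- (b * e))).
    pose proof (exp_neg_le_1 (b * e) ltac:(apply Rmult_le_pos; lra)). lra.
  - destruct (inner_integral_bounds b e eta x _ Hb He Heta ltac:(lra)
      (is_RInt_cond_outage b e eta x Heta ltac:(lra))) as [? [? _]]. lra.
Qed.

Lemma cond_outage_near_threshold b e eta x :
  0 < b -> 0 < e -> 0 < eta -> e < x -> eta * (x - e) <= 1 / 2 ->
  Rabs (cond_outage b e eta x - exp_cdf b e) <= 2 * (eta * (x - e)).
Proof.
  intros Hb He Heta Hx Hs2. unfold cond_outage, exp_cdf.
  destruct (Rle_dec x e) as [|_]; [lra|]. cbv zeta.
  set (s := eta * (x - e)) in *. assert (Hs : 0 < s) by (apply Rmult_lt_0_compat; lra).
  set (c := b * e). assert (Hc : 0 < c) by (apply Rmult_lt_0_compat; lra).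
  assert (Huc : c / s - c = c * (1 - s) / s) by (field; lra).
  assert (Huc0 : c / s - c <> 0).
  { rewrite Huc. apply Rgt_not_eq, Rdiv_lt_0_compat; [apply Rmult_lt_0_compat|]; lra. }
  unfold mean_exp. destruct (Req_EM_T (c / s - c) 0) as [|_]; [contradiction|].
  assert (E : exp (- (c / s)) = exp (- c) * exp (- (c / s - c)))
    by (rewrite <- exp_plus; f_equal; ring).
  assert (Hu : 0 <= c / s) by (apply Rlt_le, Rdiv_lt_0_compat; lra).
  pose proof (exp_pos (- c)). pose proof (exp_pos (- (c / s))).
  pose proof (exp_neg_le_1 c (Rlt_le _ _ Hc)). pose proof (exp_neg_le_1 _ Hu).
  replace (1 - exp (- (c / s)) - c / s * exp (- c) * ((1 - exp (- (c / s - c))) / (c / s - c))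
           - (1 - exp (- c)))
    with (- (exp (- c) - exp (- (c / s))) * (s / (1 - s))).
  2:{ rewrite E. field. repeat split; [lra | | lra].
      replace (c - c * s) with (c * (1 - s)) by ring. apply Rgt_not_eq, Rmult_lt_0_compat; lra. }
  rewrite Rabs_mult, Rabs_Ropp.
  assert (Rabs (exp (- c) - exp (- (c / s))) <= 1) by (apply Rabs_le; lra).
  rewrite (Rabs_right (s / (1 - s))) by (apply Rle_ge, Rdiv_le_0_compat; lra).
  assert (/ (1 - s) <= 2) by (replace 2 with (/ (1 / 2)) by field; apply Rinv_le_contravar; lra).
  assert (s / (1 - s) <= 2 * s)
    by (unfold Rdiv; rewrite (Rmult_comm 2); apply Rmult_le_compat_l; lra).
  pose proof (Rabs_pos (exp (- c) - exp (- (c / s)))).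
  assert (0 <= s / (1 - s)) by (apply Rdiv_le_0_compat; lra).
  nra.
Qed.

Lemma continuity_cond_outage_threshold b e eta :
  0 < b -> 0 < e -> 0 < eta -> continuity_pt (cond_outage b e eta) e.
Proof.
  intros Hb He Heta eps Heps.
  exists (Rmin (/ (2 * eta)) (eps / (2 * eta))). split.
  { apply Rmin_pos; [apply Rinv_0_lt_compat | apply Rdiv_lt_0_compat]; lra. }
  intros y [_ Hy]. simpl in *. unfold Rdist in *.
  assert (He0 : cond_outage b e eta e = exp_cdf b e)
    by (unfold cond_outage; destruct (Rle_dec e e); [reflexivity | lra]).
  rewrite He0. destruct (Rle_dec y e) as [Hye|Hye].
  { unfold cond_outage. destruct (Rle_dec y e); [|lra]. rewrite Rminus_diag, Rabs_R0. exact Heps. }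
  apply Rabs_def2 in Hy.
  pose proof (Rmin_l (/ (2 * eta)) (eps / (2 * eta))).
  pose proof (Rmin_r (/ (2 * eta)) (eps / (2 * eta))).
  assert (Hs2 : eta * (y - e) <= 1 / 2).
  { replace (1 / 2) with (eta * / (2 * eta)) by (field; lra).
    apply Rmult_le_compat_l; lra. }
  assert (Hs : 2 * (eta * (y - e)) < eps).
  { replace eps with (2 * (eta * (eps / (2 * eta)))) by (field; lra).
    apply Rmult_lt_compat_l; [lra|]. apply Rmult_lt_compat_l; lra. }
  pose proof (cond_outage_near_threshold b e eta y Hb He Heta ltac:(lra) Hs2). lra.
Qed.

Lemma continuity_cond_outage b e eta x :
  0 < b -> 0 < e -> 0 < eta -> continuity_pt (cond_outage b e eta) x.
Proof.
  intros Hb He Heta.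
  destruct (Rtotal_order x e) as [Hlt|[->|Hgt]].
  - apply (continuity_pt_locally_ext (fun _ => exp_cdf b e)) with (a := e - x); [lra| |].
    + intros y Hy. unfold cond_outage, Rdist in *. apply Rabs_def2 in Hy.
      destruct (Rle_dec y e); [reflexivity | lra].
    + apply continuity_pt_const. intros u v. reflexivity.
  - apply continuity_cond_outage_threshold; assumption.
  - apply (continuity_pt_locally_ext (fun y =>
           1 - exp (- (b * e / (eta * (y - e))))
           - b * e / (eta * (y - e)) * exp (- (b * e))
             * mean_exp (b * e / (eta * (y - e)) - b * e)))
      with (a := x - e); [lra| |].
    + intros y Hy. unfold cond_outage, Rdist in *. apply Rabs_def2 in Hy.
      destruct (Rle_dec y e); [lra | reflexivity].
    + assert (Hs : eta * (x - e) <> 0) by (apply Rgt_not_eq, Rmult_lt_0_compat; lra).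
      apply continuity_pt_minus; [|apply continuity_pt_mult].
      * apply continuity_pt_of_ex_derive. auto_derive. exact Hs.
      * apply continuity_pt_of_ex_derive. auto_derive. exact Hs.
      * apply (continuity_pt_comp (fun y => b * e / (eta * (y - e)) - b * e) mean_exp).
        -- apply continuity_pt_of_ex_derive. auto_derive. exact Hs.
        -- apply continuity_mean_exp.
Qed.

(** * The integral over the relay gain *)

Lemma continuity_outage_integrand b e eta a x : 0 < b -> 0 < e -> 0 < eta ->
  continuity_pt (fun x => exp_pdf a x * cond_outage b e eta x) x.
Proof.
  intros. apply continuity_pt_mult;
    [apply continuity_exp_pdf | apply continuity_cond_outage; assumption].
Qed.

Lemma ex_outage_integral b e eta a : 0 < b -> 0 < e -> 0 < eta -> 0 <= a ->
  exists L, is_RInt_infty (fun x => exp_pdf a x * cond_outage b e eta x) e L.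
Proof.
  intros Hb He Heta Ha. apply (is_RInt_infty_of_bounded _ e 1).
  - intros x. apply continuity_outage_integrand; assumption.
  - intros x Hx. pose proof (cond_outage_bounds b e eta x Hb He Heta).
    pose proof (exp_pdf_bounds a x Ha ltac:(lra)). apply Rmult_le_pos; lra.
  - intros B HB. pose proof (is_RInt_unique _ e B _ (is_RInt_exp_pdf a e B)) as Hpdf.
    pose proof (exp_pos (- (a * B))).
    pose proof (exp_neg_le_1 (a * e) ltac:(apply Rmult_le_pos; lra)).
    apply Rle_trans with (RInt (exp_pdf a) e B); [|lra].
    apply RInt_le; [exact HB | | apply ex_RInt_of_continuity, continuity_exp_pdf |].
    { apply ex_RInt_of_continuity. intros. apply continuity_outage_integrand; assumption. }
    intros x Hx. pose proof (cond_outage_bounds b e eta x Hb He Heta).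
    pose proof (exp_pdf_bounds a x Ha ltac:(lra)). nra.
Qed.

Lemma RInt_outage_rate_le b e eta a a' A B :
  0 < b -> 0 < e -> 0 < eta -> 1 <= a <= A -> 1 <= a' <= A -> e <= B ->
  RInt (fun x => exp_pdf a x * cond_outage b e eta x) e B <=
  RInt (fun x => exp_pdf a' x * cond_outage b e eta x) e B + (1 + 2 * A) * Rabs (a - a').
Proof.
  intros Hb He Heta Ha Ha' HB.
  set (K := fun x => Rabs (a - a') * (exp (- x) * (1 + A * x))).
  assert (HKc : forall x, continuity_pt K x)
    by (intros x; apply continuity_pt_of_ex_derive; unfold K; auto_derive; exact I).
  assert (Hq : forall c, ex_RInt (fun x => exp_pdf c x * cond_outage b e eta x) e B)
    by (intros c; apply ex_RInt_of_continuity; intros;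
        apply continuity_outage_integrand; assumption).
  assert (HK : RInt K e B <= (1 + 2 * A) * Rabs (a - a')).
  { replace (RInt K e B) with (Rabs (a - a') * RInt (fun x => exp (- x) * (1 + A * x)) e B).
    - pose proof (RInt_exp_neg_affine_le A e B ltac:(lra) ltac:(lra) HB).
      pose proof (Rabs_pos (a - a')). nra.
    - symmetry. apply (RInt_scal (V := R_CompleteNormedModule)).
      apply ex_RInt_of_continuity. intros x.
      apply continuity_pt_of_ex_derive. auto_derive. exact I. }
  assert (Hsum : RInt (fun x => exp_pdf a' x * cond_outage b e eta x + K x) e B
                 = RInt (fun x => exp_pdf a' x * cond_outage b e eta x) e B + RInt K e B)
    by (apply (RInt_plus (V := R_CompleteNormedModule));
        [apply Hq | apply ex_RInt_of_continuity, HKc]).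
  apply Rle_trans with (RInt (fun x => exp_pdf a' x * cond_outage b e eta x + K x) e B); [|lra].
  apply RInt_le; [exact HB | apply Hq | apply (ex_RInt_plus (V := R_CompleteNormedModule));
                  [apply Hq | apply ex_RInt_of_continuity, HKc] |].
  intros x Hx.
  pose proof (Rabs_exp_pdf_sub_le a a' A x Ha Ha' ltac:(lra)).
  pose proof (cond_outage_bounds b e eta x Hb He Heta).
  pose proof (Rle_abs (exp_pdf a x - exp_pdf a' x)).
  pose proof (Rabs_pos (exp_pdf a x - exp_pdf a' x)).
  unfold K. nra.
Qed.

Lemma outage_integral_lipschitz b e eta a a' A L L' :
  0 < b -> 0 < e -> 0 < eta -> 1 <= a <= A -> 1 <= a' <= A ->
  is_RInt_infty (fun x => exp_pdf a x * cond_outage b e eta x) e L ->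
  is_RInt_infty (fun x => exp_pdf a' x * cond_outage b e eta x) e L' ->
  Rabs (L - L') <= (1 + 2 * A) * Rabs (a - a').
Proof.
  intros Hb He Heta Ha Ha' HL HL'. apply Rabs_le. split.
  - pose proof (is_RInt_infty_le _ _ e L' L _ HL' HL
      (fun B HB => RInt_outage_rate_le b e eta a' a A B Hb He Heta Ha' Ha HB)) as Hle.
    rewrite Rabs_minus_sym in Hle. lra.
  - pose proof (is_RInt_infty_le _ _ e L L' _ HL HL'
      (fun B HB => RInt_outage_rate_le b e eta a a' A B Hb He Heta Ha Ha' HB)). lra.
Qed.

Lemma rate_bound_near r r0 : Rabs (r - r0) < 1 ->
  1 + r ^ 2 <= 1 + (Rabs r0 + 1) ^ 2 /\
  Rabs ((1 + r ^ 2) - (1 + r0 ^ 2)) <= (2 * Rabs r0 + 1) * Rabs (r - r0).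
Proof.
  intros Hr.
  assert (Hr' : Rabs r <= Rabs r0 + 1).
  { replace r with ((r - r0) + r0) at 1 by ring. pose proof (Rabs_triang (r - r0) r0). lra. }
  pose proof (Rabs_pos r). split.
  - rewrite <- (pow2_abs r). nra.
  - replace ((1 + r ^ 2) - (1 + r0 ^ 2)) with ((r - r0) * (r - r0 + 2 * r0)) by ring.
    rewrite Rabs_mult, Rmult_comm. apply Rmult_le_compat_r; [apply Rabs_pos|].
    eapply Rle_trans; [apply Rabs_triang|]. rewrite Rabs_mult, (Rabs_right 2) by lra. lra.
Qed.

Lemma continuity_outage_integral b e eta G r0 : 0 < b -> 0 < e -> 0 < eta ->
  (forall r, is_RInt_infty (fun x => exp_pdf (1 + r ^ 2) x * cond_outage b e eta x) e (G r)) ->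
  continuity_pt G r0.
Proof.
  intros Hb He Heta HG. set (A := 1 + (Rabs r0 + 1) ^ 2).
  apply (continuity_pt_of_local_lipschitz G r0 ((1 + 2 * A) * (2 * Rabs r0 + 1))).
  intros r Hr. destruct (rate_bound_near r r0 Hr) as [HrA Hdiff].
  destruct (rate_bound_near r0 r0 ltac:(rewrite Rminus_diag, Rabs_R0; lra)) as [Hr0A _].
  fold A in HrA, Hr0A. pose proof (pow2_ge_0 r). pose proof (pow2_ge_0 r0).
  eapply Rle_trans; [apply (outage_integral_lipschitz b e eta (1 + r ^ 2) (1 + r0 ^ 2) A _ _
                             Hb He Heta ltac:(split; lra) ltac:(split; lra) (HG r) (HG r0))|].
  rewrite Rmult_assoc. apply Rmult_le_compat_l; [lra | exact Hdiff].
Qed.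

Lemma is_RInt_inv_shift K e u v : e < u -> u <= v ->
  is_RInt (fun x => K * / (x - e)) u v (K * (ln (v - e) - ln (u - e))).
Proof.
  intros Hu Huv.
  replace (K * (ln (v - e) - ln (u - e))) with (K * ln (v - e) - K * ln (u - e)) by ring.
  apply (is_RInt_derive (fun x => K * ln (x - e))); intros x Hx;
    rewrite Rmin_left, Rmax_right in Hx by lra.
  - auto_derive; [lra | field; lra].
  - apply continuity_pt_filterlim, continuity_pt_of_ex_derive. auto_derive. lra.
Qed.

Lemma RInt_outage_le H b e eta a A B :
  0 < b -> 0 < e -> e <= 1 -> 0 < eta -> 1 <= a <= A -> e + 1 <= B ->
  (forall x, e < x -> 0 <= H x /\ H x <= b * e /\ H x <= b * (b * e) * (e / (eta * (x - e)))) ->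
  ex_RInt (fun x => exp_pdf a x * H x) e B ->
  RInt (fun x => exp_pdf a x * H x) e B
  <= A * (b * e) * e + A * (b * (b * e) * e / eta) * (- ln e) + b * (b * e) * e / eta.
Proof.
  intros Hb He He1 Heta Ha HB HH Hq. set (q := fun x => exp_pdf a x * H x) in *.
  (* Split at [2 e] and [e + 1]: the bound [b e] on [H] is used near [e], the bound
     [K / (x - e)] beyond; the middle piece produces the factor [- ln e]. *)
  set (K := b * (b * e) * e / eta).
  assert (HK : 0 < K) by (unfold K; apply Rdiv_lt_0_compat; [repeat apply Rmult_lt_0_compat|]; lra).
  assert (Hpt : forall x, e < x ->
    0 <= exp_pdf a x <= A /\ 0 <= H x <= b * e /\ H x <= K * / (x - e)).
  { intros x Hx. destruct (HH x Hx) as [H0 [H1 H2]].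
    pose proof (exp_pdf_bounds a x ltac:(lra) ltac:(lra)).
    repeat split; try lra. replace (K * / (x - e)) with (b * (b * e) * (e / (eta * (x - e))))
      by (unfold K; field; lra). exact H2. }
  assert (Hq1 : ex_RInt q e (e + 1)) by (apply (ex_RInt_Chasles_1 q e (e + 1) B); [lra | exact Hq]).
  assert (Hq2 : ex_RInt q (e + 1) B) by (apply (ex_RInt_Chasles_2 q e (e + 1) B); [lra | exact Hq]).
  assert (Hqa : ex_RInt q e (2 * e))
    by (apply (ex_RInt_Chasles_1 q e (2 * e) (e + 1)); [lra | exact Hq1]).
  assert (Hqb : ex_RInt q (2 * e) (e + 1))
    by (apply (ex_RInt_Chasles_2 q e (2 * e) (e + 1)); [lra | exact Hq1]).
  rewrite <- (RInt_Chasles q e (e + 1) B Hq1 Hq2), <- (RInt_Chasles q e (2 * e) (e + 1) Hqa Hqb).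
  simpl; unfold plus; simpl.
  assert (I1 : RInt q e (2 * e) <= A * (b * e) * e).
  { replace (A * (b * e) * e) with ((2 * e - e) * (A * (b * e))) by ring.
    rewrite <- (is_RInt_unique _ e (2 * e) _ (is_RInt_const_R (A * (b * e)) e (2 * e))).
    apply RInt_le; [lra | exact Hqa | apply ex_RInt_const |].
    intros x Hx. destruct (Hpt x ltac:(lra)) as [? [? _]]. apply Rmult_le_compat; lra. }
  assert (I2 : RInt q (2 * e) (e + 1) <= A * K * (- ln e)).
  { pose proof (is_RInt_inv_shift (A * K) e (2 * e) (e + 1) ltac:(lra) ltac:(lra)) as HI.
    replace (e + 1 - e) with 1 in HI by ring. replace (2 * e - e) with e in HI by ring.
    rewrite ln_1, Rminus_0_l in HI. rewrite <- (is_RInt_unique _ _ _ _ HI).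
    apply RInt_le; [lra | exact Hqb | exists (A * K * - ln e); exact HI |].
    intros x Hx. destruct (Hpt x ltac:(lra)) as [? [? ?]].
    rewrite Rmult_assoc. apply Rmult_le_compat; lra. }
  assert (I3 : RInt q (e + 1) B <= K).
  { pose proof (is_RInt_scal _ (e + 1) B K _ (is_RInt_exp_pdf a (e + 1) B)) as HI.
    unfold scal in HI; simpl in HI; unfold mult in HI; simpl in HI.
    apply Rle_trans with (K * (exp (- (a * (e + 1))) - exp (- (a * B)))).
    - rewrite <- (is_RInt_unique _ _ _ _ HI).
      apply RInt_le; [lra | exact Hq2 | eexists; exact HI |].
      intros x Hx. destruct (Hpt x ltac:(lra)) as [? [? ?]].
      assert (K * / (x - e) <= K).
      { rewrite <- (Rmult_1_r K) at 2. apply Rmult_le_compat_l; [lra|].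
        rewrite <- Rinv_1. apply Rinv_le_contravar; lra. }
      unfold q. rewrite (Rmult_comm K). apply Rmult_le_compat_l; lra.
    - pose proof (exp_pos (- (a * B))).
      pose proof (exp_neg_le_1 (a * (e + 1)) ltac:(apply Rmult_le_pos; lra)). nra. }
  lra.
Qed.

Lemma outage_integral_bounds H b e eta a A g :
  0 < b -> 0 < e -> e <= 1 -> 0 < eta -> 1 <= a <= A ->
  (forall x, e < x -> 0 <= H x /\ H x <= b * e /\ H x <= b * (b * e) * (e / (eta * (x - e)))) ->
  is_RInt_infty (fun x => exp_pdf a x * H x) e g ->
  0 <= g <= A * (b * e) * e + A * (b * (b * e) * e / eta) * (- ln e) + b * (b * e) * e / eta.
Proof.
  intros Hb He He1 Heta Ha HH Hg.
  assert (Hq : forall B, e <= B -> ex_RInt (fun x => exp_pdf a x * H x) e B)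
    by (intros B HB; destruct (proj1 Hg B HB) as [pr]; exact (ex_RInt_Reals_1 _ _ _ pr)).
  split.
  - apply (is_RInt_infty_ge_const _ e g 0 Hg). intros B HB.
    apply RInt_ge_0; [exact HB | exact (Hq B HB) |]. intros x Hx.
    destruct (HH x ltac:(lra)) as [? _]. pose proof (exp_pdf_bounds a x ltac:(lra) ltac:(lra)).
    apply Rmult_le_pos; lra.
  - apply (is_RInt_infty_le_const _ e g _ (e + 1) Hg). intros B HB.
    apply RInt_outage_le; try assumption. apply Hq. lra.
Qed.

(** * The closest relay *)

Lemma exp_neg_disc_lt_1 lam RD : 0 < lam -> 0 < RD -> exp (- (PI * lam * RD ^ 2)) < 1.
Proof.
  intros Hl HR. rewrite <- exp_0. apply exp_increasing.
  pose proof PI_RGT_0. pose proof (pow_lt RD 2 HR).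
  assert (0 < PI * lam * RD ^ 2)
    by (apply Rmult_lt_0_compat; [apply Rmult_lt_0_compat|]; assumption).
  lra.
Qed.

Lemma zeta_pos lam RD : 0 < lam -> 0 < RD -> 0 < zeta lam RD.
Proof.
  intros Hl HR. apply Rinv_0_lt_compat. pose proof (exp_neg_disc_lt_1 lam RD Hl HR). lra.
Qed.

Lemma continuity_dens_closest lam RD r : continuity_pt (dens_closest lam RD) r.
Proof. apply continuity_pt_of_ex_derive. unfold dens_closest. auto_derive. exact I. Qed.

Lemma dens_closest_bounds lam RD r : 0 < lam -> 0 < RD -> 0 <= r <= RD ->
  0 <= dens_closest lam RD r <= 2 * zeta lam RD * PI * lam * RD.
Proof.
  intros Hl HR Hr. pose proof (zeta_pos lam RD Hl HR). pose proof PI_RGT_0.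
  assert (Hc : 0 <= 2 * zeta lam RD * PI * lam)
    by (apply Rmult_le_pos; [apply Rmult_le_pos; [apply Rmult_le_pos|]|]; lra).
  pose proof (exp_pos (- (PI * lam * r ^ 2))).
  pose proof (exp_neg_le_1 (PI * lam * r ^ 2)
    ltac:(apply Rmult_le_pos; [apply Rmult_le_pos | apply pow_le]; lra)).
  unfold dens_closest. split; [apply Rmult_le_pos; [apply Rmult_le_pos|]; lra|].
  assert (0 <= 2 * zeta lam RD * PI * lam * r) by (apply Rmult_le_pos; lra).
  assert (2 * zeta lam RD * PI * lam * r <= 2 * zeta lam RD * PI * lam * RD)
    by (apply Rmult_le_compat_l; lra).
  nra.
Qed.

Lemma is_RInt_dens_closest lam RD : 0 < lam -> 0 < RD -> is_RInt (dens_closest lam RD) 0 RD 1.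
Proof.
  intros Hl HR.
  replace 1 with ((- zeta lam RD * exp (- (PI * lam * RD ^ 2)))
                  - (- zeta lam RD * exp (- (PI * lam * 0 ^ 2)))).
  - apply (is_RInt_antiderivative (fun r => - zeta lam RD * exp (- (PI * lam * r ^ 2)))).
    + intros r. auto_derive; [exact I|]. unfold dens_closest.
      replace (r * (r * 1)) with (r ^ 2) by ring. ring.
    + apply continuity_dens_closest.
  - pose proof (exp_neg_disc_lt_1 lam RD Hl HR).
    replace (PI * lam * 0 ^ 2) with 0 by ring. rewrite Ropp_0, exp_0.
    unfold zeta. field. lra.
Qed.

Lemma RInt_dens_closest_mul_bounds lam RD g lo hi : 0 < lam -> 0 < RD -> 0 <= lo ->
  (forall r, 0 < r < RD -> lo <= g r <= hi) ->
  ex_RInt (fun r => dens_closest lam RD r * g r) 0 RD ->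
  lo <= RInt (fun r => dens_closest lam RD r * g r) 0 RD
     <= RD * (2 * zeta lam RD * PI * lam * RD * hi).
Proof.
  intros Hl HR Hlo Hg Hex. split.
  - pose proof (is_RInt_scal _ 0 RD lo _ (is_RInt_dens_closest lam RD Hl HR)) as HI.
    unfold scal in HI; simpl in HI; unfold mult in HI; simpl in HI. rewrite Rmult_1_r in HI.
    rewrite <- (is_RInt_unique _ _ _ _ HI).
    apply RInt_le; [lra | eexists; exact HI | exact Hex |]. intros r Hr.
    destruct (Hg r Hr). pose proof (dens_closest_bounds lam RD r Hl HR ltac:(lra)).
    rewrite (Rmult_comm lo). apply Rmult_le_compat_l; lra.
  - replace (RD * (2 * zeta lam RD * PI * lam * RD * hi))
      with ((RD - 0) * (2 * zeta lam RD * PI * lam * RD * hi)) by ring.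
    rewrite <- (is_RInt_unique _ _ _ _
                 (is_RInt_const_R (2 * zeta lam RD * PI * lam * RD * hi) 0 RD)).
    apply RInt_le; [lra | exact Hex | apply ex_RInt_const |]. intros r Hr.
    destruct (Hg r Hr). pose proof (dens_closest_bounds lam RD r Hl HR ltac:(lra)).
    apply Rmult_le_compat; lra.
Qed.

Lemma tau_pos Rt : 0 < Rt -> 0 < tau Rt.
Proof.
  intros H. unfold tau, Rpower. pose proof ln_lt_2.
  pose proof (exp_increasing 0 (2 * Rt * ln 2) ltac:(nra)). rewrite exp_0 in *. lra.
Qed.

(** * Existence and order of magnitude of P2 *)

Lemma ex_P2 d lam RD eta Rt P : 0 < eta -> 0 < Rt -> 0 < P ->
  exists v, is_P2 d lam RD eta Rt P v.
Proof.
  intros Heta HRt HP. unfold is_P2.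
  set (e := epsP Rt P). set (b := 1 + d ^ 2).
  assert (He : 0 < e) by (apply Rdiv_lt_0_compat; [apply tau_pos|]; assumption).
  assert (Hb : 0 < b) by (unfold b; pose proof (pow2_ge_0 d); lra).
  assert (HG : forall r, exists L,
    is_RInt_infty (fun x => exp_pdf (1 + r ^ 2) x * cond_outage b e eta x) e L)
    by (intros r; apply ex_outage_integral; [assumption.. | pose proof (pow2_ge_0 r); lra]).
  set (G := fun r => proj1_sig (constructive_indefinite_description _ (HG r))).
  assert (HGr : forall r,
    is_RInt_infty (fun x => exp_pdf (1 + r ^ 2) x * cond_outage b e eta x) e (G r))
    by (intros r; exact (proj2_sig (constructive_indefinite_description _ (HG r)))).
  assert (HGc : forall r0, continuity_pt G r0)
    by (intros r0; exact (continuity_outage_integral b e eta G r0 Hb He Heta HGr)).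
  exists (RInt (fun r => dens_closest lam RD r * G r) 0 RD
          + exp_cdf b e * RInt (fun r => dens_closest lam RD r * exp_cdf (1 + r ^ 2) e) 0 RD).
  exists (cond_outage b e eta), G,
    (RInt (fun r => dens_closest lam RD r * G r) 0 RD),
    (RInt (fun r => dens_closest lam RD r * exp_cdf (1 + r ^ 2) e) 0 RD).
  refine (conj _ (conj _ (conj _ (conj _ eq_refl)))).
  - intros x Hx. apply Defs_is_RInt_of_is_RInt, is_RInt_cond_outage; assumption.
  - intros r _. apply HGr.
  - apply Defs_is_RInt_of_is_RInt, (RInt_correct (V := R_CompleteNormedModule)).
    apply ex_RInt_of_continuity.
    intros r. apply continuity_pt_mult; [apply continuity_dens_closest | apply HGc].
  - apply Defs_is_RInt_of_is_RInt, (RInt_correct (V := R_CompleteNormedModule)).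
    apply ex_RInt_of_continuity.
    intros r. apply continuity_pt_mult; [apply continuity_dens_closest|].
    apply continuity_pt_of_ex_derive. unfold exp_cdf. auto_derive. exact I.
Qed.

Lemma P2_sandwich d lam RD eta : 0 < lam -> 0 < RD -> 0 < eta ->
  exists C1 C2, 0 < C1 /\ 0 <= C2 /\ forall Rt P v, 0 < Rt -> 0 < P ->
    (1 + d ^ 2) * epsP Rt P <= 1 -> is_P2 d lam RD eta Rt P v ->
    (1 + d ^ 2) / 4 * epsP Rt P ^ 2 <= v <= epsP Rt P ^ 2 * (C1 + C2 * (- ln (epsP Rt P))).
Proof.
  intros Hl HR Heta.
  set (b := 1 + d ^ 2). set (A := 1 + RD ^ 2). set (F := 2 * zeta lam RD * PI * lam * RD).
  assert (Hb : 1 <= b) by (unfold b; pose proof (pow2_ge_0 d); lra).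
  assert (Hb' : 0 < b) by lra.
  assert (HA : 1 <= A) by (unfold A; pose proof (pow2_ge_0 RD); lra).
  assert (HF : 0 < F).
  { pose proof (zeta_pos lam RD Hl HR). pose proof PI_RGT_0. unfold F.
    apply Rmult_lt_0_compat; [|lra]. apply Rmult_lt_0_compat; [|lra].
    apply Rmult_lt_0_compat; [|lra]. apply Rmult_lt_0_compat; lra. }
  assert (Hbb : 0 < b * b / eta) by (apply Rdiv_lt_0_compat; nra).
  exists (RD * F * (2 * A * b + b * b / eta)), (RD * F * (A * (b * b / eta))).
  split; [apply Rmult_lt_0_compat; [apply Rmult_lt_0_compat|]; nra|].
  split; [apply Rmult_le_pos; [apply Rmult_le_pos|]; nra|].
  intros Rt P v HRt HP Hbe [H [G [T1 [T2 [HH [HG [HT1 [HT2 ->]]]]]]]].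
  fold b in HH, HG, HT1, HT2, Hbe |- *. set (e := epsP Rt P) in *.
  assert (He : 0 < e) by (apply Rdiv_lt_0_compat; [apply tau_pos|]; assumption).
  assert (He1 : e <= 1) by nra.
  assert (Hln : 0 <= - ln e) by (pose proof (ln_le e 1 He He1) as Hl1; rewrite ln_1 in Hl1; lra).
  assert (HHb : forall x, e < x ->
    0 <= H x /\ H x <= b * e /\ H x <= b * (b * e) * (e / (eta * (x - e)))).
  { intros x Hx. destruct (RInt_of_Defs_is_RInt _ _ _ _ (HH x Hx)) as [Hex Hv].
    rewrite <- Hv. destruct (inner_integral_bounds b e eta x _ ltac:(lra) He Heta Hx
                               (RInt_correct _ _ _ Hex)) as [? [_ ?]]. tauto. }
  set (Kg := A * (b * e) * e + A * (b * (b * e) * e / eta) * (- ln e) + b * (b * e) * e / eta).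
  assert (Hrate : forall r, 0 <= r <= RD -> 1 <= 1 + r ^ 2 <= A).
  { intros r Hr. unfold A. pose proof (pow2_ge_0 r).
    split; [lra | apply Rplus_le_compat_l, pow_incr; lra]. }
  assert (HGb : forall r, 0 <= r <= RD -> 0 <= G r <= Kg)
    by (intros r Hr;
        exact (outage_integral_bounds H b e eta _ A _ Hb' He He1 Heta (Hrate r Hr) HHb (HG r Hr))).
  destruct (RInt_of_Defs_is_RInt _ _ _ _ HT1) as [Hex1 <-].
  destruct (RInt_of_Defs_is_RInt _ _ _ _ HT2) as [Hex2 <-].
  pose proof (RInt_dens_closest_mul_bounds lam RD G 0 Kg Hl HR (Rle_refl 0)
    (fun r Hr => HGb r ltac:(lra)) Hex1) as T1b.
  pose proof (RInt_dens_closest_mul_bounds lam RD (fun r => exp_cdf (1 + r ^ 2) e) (e / 2) (A * e)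
    Hl HR ltac:(lra) (fun r Hr => exp_cdf_rate_bounds _ A e (Hrate r ltac:(lra)) ltac:(lra)) Hex2)
    as T2b.
  fold F in T1b, T2b.
  pose proof (exp_cdf_bounds b e ltac:(nra)). pose proof (exp_cdf_ge_half b e ltac:(nra)).
  split.
  - assert (b * e / 2 * (e / 2) <= exp_cdf b e
              * RInt (fun r => dens_closest lam RD r * exp_cdf (1 + r ^ 2) e) 0 RD)
      by (apply Rmult_le_compat; nra).
    replace (b / 4 * e ^ 2) with (b * e / 2 * (e / 2)) by field. lra.
  - apply Rle_trans with (RD * (F * Kg) + b * e * (RD * (F * (A * e)))).
    + apply Rplus_le_compat; [lra|]. apply Rmult_le_compat; lra.
    + right. unfold Kg. field. lra.
Qed.

(** * Diversity gain *)

Lemma ln_le_eps_mul eps L : 0 < eps -> 4 / eps ^ 2 <= L -> ln L <= eps * L.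
Proof.
  intros Heps HL.
  assert (HL0 : 0 < L)
    by (eapply Rlt_le_trans; [|exact HL]; apply Rdiv_lt_0_compat; [lra | apply pow_lt, Heps]).
  set (s := sqrt L). assert (Hs : 0 < s) by apply sqrt_lt_R0, HL0.
  assert (Hss : L = s * s) by (symmetry; apply sqrt_sqrt; lra).
  assert (Hs2 : 2 <= eps * s).
  { apply Rnot_lt_le. intros Hlt.
    assert (s < 2 / eps) by (apply Rlt_div_r; lra).
    assert (s * s < 2 / eps * (2 / eps)) by (apply Rmult_le_0_lt_compat; lra).
    replace (2 / eps * (2 / eps)) with (4 / eps ^ 2) in * by (field; lra). lra. }
  pose proof (exp_ineq1_le (ln s)). rewrite exp_ln in * by exact Hs.
  rewrite Hss, ln_mult by exact Hs. nra.
Qed.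

Lemma ln_sandwich tau kap C1 C2 P v :
  0 < tau -> 0 < kap -> 0 < C1 -> 0 <= C2 -> 0 < P -> 1 <= ln P ->
  kap * (tau / P) ^ 2 <= v -> v <= (tau / P) ^ 2 * (C1 + C2 * (- ln (tau / P))) ->
  ln kap + 2 * ln tau - 2 * ln P <= ln v
  <= 2 * ln tau + ln (C1 + C2 + C2 * Rabs (ln tau)) - 2 * ln P + ln (ln P).
Proof.
  intros Htau Hkap HC1 HC2 HP HL Hlo Hup.
  set (c := ln tau) in *. set (C3 := C1 + C2 + C2 * Rabs c). set (L := ln P) in *.
  pose proof (Rabs_pos c).
  assert (HC3 : 0 < C3) by (unfold C3; nra).
  set (e := tau / P) in *. assert (He : 0 < e) by (apply Rdiv_lt_0_compat; assumption).
  assert (Hlne : ln e = c - L) by (apply ln_div; assumption).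
  assert (He2 : 0 < e ^ 2) by (apply pow_lt, He).
  assert (Hv : 0 < v) by (pose proof (Rmult_lt_0_compat _ _ Hkap He2); lra).
  assert (Hln_e2 : ln (e ^ 2) = 2 * (c - L)) by (rewrite ln_pow, Hlne by exact He; simpl; ring).
  split.
  - rewrite <- (ln_exp (ln kap + 2 * c - 2 * L)). apply ln_le; [apply exp_pos|].
    replace (ln kap + 2 * c - 2 * L) with (ln (kap * e ^ 2))
      by (rewrite ln_mult, Hln_e2 by assumption; ring).
    rewrite exp_ln by nra. exact Hlo.
  - assert (C1 + C2 * (- ln e) <= C3 * L).
    { rewrite Hlne. unfold C3. pose proof (Rle_abs (- c)) as Hc. rewrite Rabs_Ropp in Hc.
      assert (0 <= C1 * (L - 1)) by (apply Rmult_le_pos; lra).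
      assert (0 <= C2 * Rabs c * (L - 1)) by (apply Rmult_le_pos; [apply Rmult_le_pos|]; lra).
      assert (C2 * - c <= C2 * Rabs c) by (apply Rmult_le_compat_l; lra). nra. }
    apply Rle_trans with (ln (e ^ 2 * (C3 * L))).
    + apply ln_le; [exact Hv|]. eapply Rle_trans; [exact Hup|]. apply Rmult_le_compat_l; lra.
    + rewrite !ln_mult, Hln_e2 by nra. lra.
Qed.

Lemma neg_ln_ratio_close_to_2 tau kap C1 C2 eps :
  0 < tau -> 0 < kap -> 0 < C1 -> 0 <= C2 -> 0 < eps ->
  exists M, forall P v, M < P ->
    kap * (tau / P) ^ 2 <= v -> v <= (tau / P) ^ 2 * (C1 + C2 * (- ln (tau / P))) ->
    Rabs (- (ln v / ln P) - 2) < eps.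
Proof.
  intros Htau Hkap HC1 HC2 Heps.
  set (k1 := ln kap + 2 * ln tau). set (k2 := 2 * ln tau + ln (C1 + C2 + C2 * Rabs (ln tau))).
  pose proof (Rabs_pos k1). pose proof (Rabs_pos k2).
  assert (0 <= Rabs k1 / eps) by (apply Rdiv_le_0_compat; lra).
  assert (0 <= 2 * Rabs k2 / eps) by (apply Rdiv_le_0_compat; lra).
  assert (0 <= 4 / (eps / 2) ^ 2) by (apply Rdiv_le_0_compat; [lra | apply pow_lt; lra]).
  exists (exp (1 + Rabs k1 / eps + 2 * Rabs k2 / eps + 4 / (eps / 2) ^ 2)).
  intros P v HP Hlo Hup.
  assert (HP0 : 0 < P) by (eapply Rlt_trans; [apply exp_pos | exact HP]).
  apply ln_increasing in HP; [|apply exp_pos]. rewrite ln_exp in HP.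
  assert (HL1 : 1 <= ln P) by lra.
  destruct (ln_sandwich tau kap C1 C2 P v Htau Hkap HC1 HC2 HP0 HL1 Hlo Hup) as [Hlow Hhigh].
  fold k1 k2 in Hlow, Hhigh. set (L := ln P) in *.
  pose proof (ln_le_eps_mul (eps / 2) L ltac:(lra) ltac:(lra)).
  assert (Rabs k1 < eps * L).
  { replace (Rabs k1) with (Rabs k1 / eps * eps) by (field; lra).
    rewrite (Rmult_comm eps). apply Rmult_lt_compat_r; lra. }
  assert (2 * Rabs k2 < eps * L).
  { replace (2 * Rabs k2) with (2 * Rabs k2 / eps * eps) by (field; lra).
    rewrite (Rmult_comm eps). apply Rmult_lt_compat_r; lra. }
  pose proof (Rle_abs (- k1)). pose proof (Rle_abs k2). rewrite Rabs_Ropp in *.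
  replace (- (ln v / L) - 2) with (- (ln v + 2 * L) / L) by (field; lra).
  apply Rabs_def1; [apply Rlt_div_l | apply Rlt_div_r]; lra.
Qed.

Theorem theorem2 (d lam RD eta Rt : R) :
  0 < d -> 0 < lam -> 0 < RD -> 0 < eta <= 1 -> 0 < Rt ->
  (exists P2 : R -> R, forall P, 0 < P -> is_P2 d lam RD eta Rt P (P2 P)) /\
  (forall P2 : R -> R, (forall P, 0 < P -> is_P2 d lam RD eta Rt P (P2 P)) ->
     forall e, 0 < e -> exists M, forall P, M < P ->
       Rabs (- (ln (P2 P) / ln P) - 2) < e).
Proof.
  intros _ Hl HR [Heta _] HRt. split.
  - assert (HE : forall P, exists v, 0 < P -> is_P2 d lam RD eta Rt P v).
    { intros P. destruct (Rlt_or_le 0 P) as [HP|HP].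
      - destruct (ex_P2 d lam RD eta Rt P Heta HRt HP) as [v Hv]. exists v. intros _. exact Hv.
      - exists 0. intros. lra. }
    exists (fun P => proj1_sig (constructive_indefinite_description _ (HE P))).
    intros P. exact (proj2_sig (constructive_indefinite_description _ (HE P))).
  - intros P2 HP2 eps Heps.
    destruct (P2_sandwich d lam RD eta Hl HR Heta) as [C1 [C2 [HC1 [HC2 Hsandwich]]]].
    set (b := 1 + d ^ 2). assert (Hb : 1 <= b) by (unfold b; pose proof (pow2_ge_0 d); lra).
    pose proof (tau_pos Rt HRt) as Htau.
    destruct (neg_ln_ratio_close_to_2 (tau Rt) (b / 4) C1 C2 eps Htau ltac:(lra) HC1 HC2 Heps)
      as [M HM].
    exists (Rmax M (tau Rt * b)). intros P HP.
    pose proof (Rmax_l M (tau Rt * b)). pose proof (Rmax_r M (tau Rt * b)).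
    assert (HP0 : 0 < P) by nra.
    assert (Hbe : b * epsP Rt P <= 1).
    { unfold epsP. replace (b * (tau Rt / P)) with (tau Rt * b / P) by (field; lra).
      apply Rle_div_l; lra. }
    destruct (Hsandwich Rt P (P2 P) HRt HP0 Hbe (HP2 P HP0)).
    apply HM; [lra | |]; assumption.
Qed.
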